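(* Let $\Gamma$ be a distance-regular antipodal double cover with diameter $D\ge 3$ and vertex set $X$. Let $x\in X$ and let $\hat{x}$ be the antipode of $x$. Then a subspace $W\subseteq V$ is an irreducible $T(x)$-module if and only if $W$ is an irreducible $T(\hat{x})$-module.
   Context: A distance-regular graph of diameter $D$ is an antipodal double cover if for every vertex $x$ there is exactly one vertex $\hat{x}$ (the antipode of $x$) with $\partial(x,\hat{x})=D$. Let $A$ be the adjacency matrix, $V=\mathbb{C}^X$, and for $x\in X$ and $0\le i\le D$ let $E^*_i(x)$ be the diagonal matrix with $(E^*_i(x))_{yy}=1$ if $\partial(x,y)=i$ and $0$ otherwise. The Terwilliger algebra $T(x)$ is the subalgebra of $\mathrm{Mat}_X(\mathbb{C})$ generated by $A,E^*_0(x),\dots,E^*_D(x)$. A $T(x)$-module is a subspace $W\subseteq V$ with $BW\subseteq W$ for all $B\in T(x)$; it is irreducible if it is nonzero and has no $T(x)$-submodules other than $0$ and $W$. *)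

From HB Require Import structures.
From mathcomp Require Import all_boot all_order all_algebra all_field.
Set Implicit Arguments. Unset Strict Implicit. Unset Printing Implicit Defensive.
Import GRing.Theory Num.Theory.
Local Open Scope ring_scope.

(* Graphs: vertex set 'I_n (any finite vertex set X, relabelled), edge relation e. *)
Section Graph.
Variable T : finType.
Variable e : rel T.

Definition walkb (k : nat) (x y : T) : bool :=
  [exists p : k.-tuple T, path e x p && (last x p == y)].

(* path-length distance; in a connected graph it is < #|T| so the search
   over iota 0 #|T| returns the true distance *)
Definition gdist (x y : T) : nat :=
  find (fun k => walkb k x y) (iota 0 #|T|).

Definition diameter : nat := (\max_(x : T) \max_(y : T) gdist x y)%N.

Definition distance_regular : Prop :=
  [/\ symmetric e, irreflexive e, (forall x y : T, connect e x y) &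
      exists p : nat -> nat -> nat -> nat,
        forall (x y : T) (i j : nat),
          #|[set z | (gdist x z == i) && (gdist y z == j)]| = p (gdist x y) i j].

Definition antipodal_double_cover : Prop :=
  forall x : T, #|[set y | gdist x y == diameter]| = 1%N.
End Graph.

Section Terwilliger.
Variable n : nat.
Variable e : rel 'I_n.

Definition adjmx : 'M[algC]_n := \matrix_(y, z) (e y z)%:R.

Definition dualidem (x : 'I_n) (i : nat) : 'M[algC]_n :=
  \matrix_(y, z) ((y == z) && (gdist e x y == i))%:R.

Inductive in_Talg (x : 'I_n) : 'M[algC]_n -> Prop :=
| Talg_A : in_Talg x adjmx
| Talg_E i : (i <= diameter e)%N -> in_Talg x (dualidem x i)
| Talg_1 : in_Talg x 1%:M
| Talg_add B C : in_Talg x B -> in_Talg x C -> in_Talg x (B + C)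
| Talg_scale (c : algC) B : in_Talg x B -> in_Talg x (c *: B)
| Talg_mul B C : in_Talg x B -> in_Talg x C -> in_Talg x (B *m C).

(* subspaces of V = C^X are represented by row spaces of square matrices;
   a vector v (a row) is mapped by B (acting on columns) to (B v^T)^T = v B^T *)
Definition is_Tmodule (x : 'I_n) (W : 'M[algC]_n) : Prop :=
  forall B, in_Talg x B -> (W *m B^T <= W)%MS.

Definition irreducible_Tmodule (x : 'I_n) (W : 'M[algC]_n) : Prop :=
  [/\ is_Tmodule x W, W != 0 &
      forall U : 'M[algC]_n, (U <= W)%MS -> is_Tmodule x U ->
        U = 0 \/ (U == W)%MS].
End Terwilliger.

From mathcomp Require Import all_boot all_order all_algebra all_field.
Set Implicit Arguments. Unset Strict Implicit. Unset Printing Implicit Defensive.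
Import GRing.Theory Num.Theory.
Local Open Scope ring_scope.

(* The antipode [b] of [a] is the only vertex at distance [D] from [a], so the
   set {w | d(a,w) = D, d(z,w) = j} is {b} when d(z,b) = j and empty otherwise.
   Hence d(b,z) = j iff p^{d(a,z)}_{D,j} = 1, i.e. E*_j(b) is a sum of the
   E*_i(a), whence T(b) <= T(a).  By symmetry T(a) = T(b), and equal algebras
   have the same irreducible modules. *)

Section Distance.
Variable T : finType.
Variable e : rel T.
Hypothesis esym : symmetric e.

Lemma walkb_sym k x y : walkb e k x y -> walkb e k y x.
Proof.
case/existsP=> p /andP[pp /eqP lp]; apply/existsP.
have sz : size (rev (belast x p)) == k by rewrite size_rev size_belast size_tuple.
exists (Tuple sz) => /=.
have er : (fun z t => e t z) =2 e by move=> ??; rewrite esym.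
rewrite -lp rev_path (eq_path er) pp /=.
by case: (lastP p) => [|q a] //=; rewrite belast_rcons rev_cons last_rcons.
Qed.

Lemma gdist_sym x y : gdist e x y = gdist e y x.
Proof. by apply: eq_find => k; apply/idP/idP; apply: walkb_sym. Qed.

Lemma gdist_le_diameter x y : (gdist e x y <= diameter e)%N.
Proof.
apply: leq_trans (leq_bigmax x).
exact: (leq_bigmax (F := fun y => gdist e x y) y).
Qed.
End Distance.

Section Antipode.
Variable T : finType.
Variable e : rel T.
Local Notation D := (diameter e).
Variable p : nat -> nat -> nat -> nat.
Hypothesis esym : symmetric e.
Hypothesis hp : forall (x y : T) (i j : nat),
  #|[set z | (gdist e x z == i) && (gdist e y z == j)]| = p (gdist e x y) i j.
Hypothesis hanti : antipodal_double_cover e.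

Lemma antipode_set1 a b : gdist e a b = D -> [set w | gdist e a w == D] = [set b].
Proof.
move=> hab; have /eqP/cards1P[c hc] := hanti a.
suff -> : b = c by [].
by apply/set1P; rewrite -hc inE hab.
Qed.

Lemma gdist_antipodeE a b z j : gdist e a b = D ->
  (gdist e b z == j) = (p (gdist e a z) D j == 1%N).
Proof.
move=> hab; rewrite -hp (gdist_sym esym b z).
have -> : [set w | (gdist e a w == D) && (gdist e z w == j)] =
          [set w | gdist e a w == D] :&: [set w | gdist e z w == j].
  by apply/setP => w; rewrite !inE.
rewrite (antipode_set1 hab).
have [hbz|hbz] := boolP (gdist e z b == j).
- by rewrite (setIidPl _) ?cards1 // sub1set inE.
- rewrite (_ : _ :&: _ = set0) ?cards0 //.
  by apply/setP => w; rewrite !inE; case: eqP => // ->; rewrite (negbTE hbz).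
Qed.
End Antipode.

Section Terwilliger.
Variable n : nat.
Variable e : rel 'I_n.
Local Notation D := (diameter e).

Lemma Talg_sum x (I : finType) (P : pred I) (F : I -> 'M[algC]_n) :
  (forall i, P i -> in_Talg e x (F i)) -> in_Talg e x (\sum_(i | P i) F i).
Proof.
move=> hF; apply: (big_ind (in_Talg e x)) => //; last by move=> ???; apply: Talg_add.
by rewrite -(scale0r 1%:M); apply/Talg_scale/Talg_1.
Qed.

Lemma sum_dualidem a (P : pred nat) :
  \sum_(i < D.+1 | P i) dualidem e a i =
  \matrix_(y, z) ((y == z) && P (gdist e a y))%:R.
Proof.
apply/matrixP => y z; rewrite !mxE summxE big_mkcond /=.
have dy : (gdist e a y < D.+1)%N by rewrite ltnS gdist_le_diameter.
rewrite (bigD1 (Ordinal dy)) //= big1 ?addr0 => [|i neq_i].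
  by case: (P _); rewrite ?mxE ?eqxx ?andbT ?andbF.
rewrite mxE; case: (P i) => //; rewrite andbC; case: eqP => // hi.
by case/eqP: neq_i; apply: val_inj.
Qed.

Lemma is_Tmodule_eq x y W :
  (forall B, in_Talg e x B <-> in_Talg e y B) ->
  is_Tmodule e x W <-> is_Tmodule e y W.
Proof. by move=> hT; split => hW B /hT; apply: hW. Qed.

Lemma irreducible_Tmodule_eq x y W :
  (forall B, in_Talg e x B <-> in_Talg e y B) ->
  irreducible_Tmodule e x W <-> irreducible_Tmodule e y W.
Proof.
move=> hT; have hM U := is_Tmodule_eq U hT.
split=> -[hW nzW irrW]; split=> //.
- exact/hM.
- by move=> U sUW /hM; apply: irrW.
- exact/hM.
- by move=> U sUW /hM; apply: irrW.
Qed.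

Variable p : nat -> nat -> nat -> nat.
Hypothesis esym : symmetric e.
Hypothesis hp : forall (x y : 'I_n) (i j : nat),
  #|[set z | (gdist e x z == i) && (gdist e y z == j)]| = p (gdist e x y) i j.
Hypothesis hanti : antipodal_double_cover e.

Lemma dualidem_antipode a b j : gdist e a b = D ->
  dualidem e b j = \sum_(i < D.+1 | p i D j == 1%N) dualidem e a i.
Proof.
move=> hab; rewrite (sum_dualidem a (fun i => p i D j == 1%N)).
by apply/matrixP => y z; rewrite !mxE (gdist_antipodeE esym hp hanti _ _ hab).
Qed.

Lemma Talg_antipode a b B : gdist e a b = D -> in_Talg e b B -> in_Talg e a B.
Proof.
move=> hab; elim=> {B} [|i _||? ? _ ? _ ?|? ? _ ?|? ? _ ? _ ?].
- exact: Talg_A.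
- rewrite (dualidem_antipode _ hab); apply: Talg_sum => k _.
  exact/Talg_E/ltnSE.
- exact: Talg_1.
- exact: Talg_add.
- exact: Talg_scale.
- exact: Talg_mul.
Qed.
End Terwilliger.

Theorem lemma6p1 (n : nat) (e : rel 'I_n) (x xh : 'I_n) :
  distance_regular e -> antipodal_double_cover e -> (3 <= diameter e)%N ->
  gdist e x xh = diameter e ->
  forall W : 'M[algC]_n,
    irreducible_Tmodule e x W <-> irreducible_Tmodule e xh W.
Proof.
move=> [esym _ _ [p hp]] hanti _ hx W.
have hxh : gdist e xh x = diameter e by rewrite (gdist_sym esym).
apply: irreducible_Tmodule_eq => B; split.
- exact: (Talg_antipode esym hp hanti hxh).
- exact: (Talg_antipode esym hp hanti hx).
Qed.
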